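(* Let $X$ be a real Banach space with a normalized unconditional basis $\mathcal B=(e_n)_{n=1}^\infty$ with biorthogonal functionals $(e_n^* )$ and unconditional constant $M$, and let $\mathcal E=(\varepsilon_n)_{n=1}^\infty$ be a sequence of nonnegative numbers. Let $x_0$ be an extreme point of the brick $K_{\mathcal B,\mathcal E}$. Then $\|x\|\le M\|x_0\|$ for every $x\in K_{\mathcal B,\mathcal E}$. In particular, if $\mathcal B$ is $1$-unconditional then $\|x\|\le\|x_0\|$ for every $x\in K_{\mathcal B,\mathcal E}$.
   Context: The brick is $K_{\mathcal B,\mathcal E}=\{x\in X:\ |e_n^*(x)|\le\varepsilon_n \text{ for all } n\}$. A point $x_0\in A$ is an extreme point of $A$ if for every nonzero $x\in X$ there is $\lambda\in[-1,1]$ with $x_0+\lambda x\notin A$. For an unconditional basis and a sign sequence $\Theta=(\theta_n)$, $\theta_n=\pm1$, let $M_\Theta x=\sum_n\theta_ne_n^*(x)e_n$; the unconditional constant is $\sup_\Theta\|M_\Theta\|$, and the basis is $1$-unconditional if this constant equals $1$. *)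

From HB Require Import structures.
From mathcomp Require Import all_boot all_order all_algebra.
From mathcomp Require Import all_classical all_reals all_analysis.
Set Implicit Arguments. Unset Strict Implicit. Unset Printing Implicit Defensive.
Import Order.TTheory GRing.Theory Num.Theory.
Import numFieldNormedType.Exports.
Local Open Scope classical_set_scope.
Local Open Scope ring_scope.

Section Defs.
Context {R : realType} {X : completeNormedModType R}.

Definition schauder_basis (e : nat -> X) (es : nat -> X -> R) : Prop :=
  [/\ (forall n (a : R) (x y : X), es n (a *: x + y) = a * es n x + es n y),
      (forall n, continuous (es n)),
      (forall n m, es n (e m) = if n == m then 1 else 0) &
      (forall x : X, series (fun k => es k x *: e k) @ \oo --> x)].

Definition normalized (e : nat -> X) : Prop := forall n, `|e n| = 1.

Definition sign_seq (theta : nat -> R) : Prop :=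
  forall n, theta n = 1 \/ theta n = -1.

Definition MTheta_is (e : nat -> X) (es : nat -> X -> R)
  (theta : nat -> R) (x y : X) : Prop :=
  series (fun k => (theta k * es k x) *: e k) @ \oo --> y.

Definition unconditional_basis (e : nat -> X) (es : nat -> X -> R) : Prop :=
  schauder_basis e es /\
  forall theta x, sign_seq theta -> exists y, MTheta_is e es theta x y.

Definition bounds_all_MTheta (e : nat -> X) (es : nat -> X -> R) (c : R) : Prop :=
  forall theta x y, sign_seq theta -> MTheta_is e es theta x y -> `|y| <= c * `|x|.

Definition unconditional_constant (e : nat -> X) (es : nat -> X -> R) (M : R) : Prop :=
  bounds_all_MTheta e es M /\ forall c, bounds_all_MTheta e es c -> M <= c.

Definition brick (es : nat -> X -> R) (eps : nat -> R) : set X :=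
  [set x | forall n, `|es n x| <= eps n].

Definition extreme_point (A : set X) (x0 : X) : Prop :=
  A x0 /\ forall x : X, x != 0 ->
    exists lam : R, -1 <= lam <= 1 /\ ~ A (x0 + lam *: x).

End Defs.

(** An extreme point x0 of the brick must have |e_n^*(x0)| = eps_n for every n:
    otherwise x0 could be moved a little along e_n in both directions without
    leaving the brick. Hence every x of the brick has coordinates u_n e_n^*(x0)
    with |u_n| <= 1. The set of coefficient sequences u for which the series
    sum_n u_n e_n^*(x0) e_n converges with sum of norm at most M ||x0|| is
    convex and contains all sign sequences (these give M_Theta x0), so by
    induction on the number of non-sign coordinates it contains every u with
    |u_n| <= 1 that is eventually a sign sequence. Truncating u shows that every
    partial sum of the expansion of x is bounded by M ||x0||, and so is x. *)

From HB Require Import structures.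
From mathcomp Require Import all_boot all_order all_algebra.
From mathcomp Require Import all_classical all_reals all_analysis.
From mathcomp Require Import ring lra.

Import Order.TTheory GRing.Theory Num.Theory.
Import numFieldNormedType.Exports.
Local Open Scope classical_set_scope.
Local Open Scope ring_scope.

Section BoundedSums.
Context {R : realType} {V : normedModType R} (v : nat -> V) (C : R).

Definition bounded_sum (u : nat -> R) : Prop :=
  exists y, series (fun k => u k *: v k) @ \oo --> y /\ `|y| <= C.

Lemma bounded_sum_convex (a b : nat -> R) (lam : R) :
  0 <= lam -> lam <= 1 -> bounded_sum a -> bounded_sum b ->
  bounded_sum (fun k => lam * a k + (1 - lam) * b k).
Proof.
move=> lam_ge0 lam_le1 [ya [cva nya]] [yb [cvb nyb]].
exists (lam *: ya + (1 - lam) *: yb); split.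
  have -> : (fun k => (lam * a k + (1 - lam) * b k) *: v k) =
      lam *: (fun k => a k *: v k) + (1 - lam) *: (fun k => b k *: v k).
    by apply/funext => k; rewrite !fctE scalerDl !scalerA.
  by rewrite seriesD !seriesZ; apply: cvgD; apply: cvgZl_tmp.
have lam'_ge0 : 0 <= 1 - lam by rewrite subr_ge0.
apply: le_trans (ler_normD _ _) _.
rewrite !normrZ (ger0_norm lam_ge0) (ger0_norm lam'_ge0).
have := ler_wpM2l lam_ge0 nya; have := ler_wpM2l lam'_ge0 nyb.
lra.
Qed.

Lemma norm_le_of_partial_sums (w : nat -> V) (x : V) :
  series w @ \oo --> x -> (forall N, `|series w N| <= C) -> `|x| <= C.
Proof.
move=> cvx bounded; apply: (ler_cvg_to (cvg_norm cvx) (cvg_cst C)).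
by near=> N; apply: bounded.
Unshelve. all: end_near.
Qed.

Hypothesis signed_bounded : forall theta, sign_seq theta -> bounded_sum theta.

Lemma bounded_sum_eventually_sign (N : nat) (u : nat -> R) :
  (forall n, `|u n| <= 1) -> (forall n, (N <= n)%N -> u n = 1 \/ u n = -1) ->
  bounded_sum u.
Proof.
elim: N u => [|N IH] u u_le1 u_sign; first by apply: signed_bounded => n; exact: u_sign.
pose set_N (s : R) n := if n == N then s else u n.
have bounded_set_N s : s = 1 \/ s = -1 -> bounded_sum (set_N s).
  move=> s_sign; apply: IH => n; rewrite /set_N; case: eqP => [_|nN].
  - by case: s_sign => ->; rewrite ?normrN normr1.
  - exact: u_le1.
  - by move=> _; exact: s_sign.
  - by move=> Nn; apply: u_sign; rewrite ltn_neqAle Nn andbT eq_sym; apply/eqP.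
have /ler_normlP[uN_ge uN_le] := u_le1 N.
have -> : u = fun k => (1 + u N) / 2 * set_N 1 k + (1 - (1 + u N) / 2) * set_N (-1) k.
  by apply/funext => k; rewrite /set_N; case: eqVneq => [->|_]; field.
apply: bounded_sum_convex; try lra.
- by apply: bounded_set_N; left.
- by apply: bounded_set_N; right.
Qed.

Lemma series_truncated_cvg (w : nat -> V) (N : nat) :
  series (fun k => if (k < N)%N then w k else 0) @ \oo --> series w N.
Proof.
apply: cvg_near_cst; near=> n.
have Nn : (N <= n)%N by near: n; exact: nbhs_infty_ge.
rewrite !seriesEnat /= (big_cat_nat (leq0n N) Nn) /=.
have -> : \sum_(N <= k < n) (if (k < N)%N then w k else 0) = 0.
  by rewrite big_nat_cond big1 // => k /andP[/andP[Nk _] _]; rewrite ltnNge Nk.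
by rewrite addr0; apply: eq_big_nat => k /andP[_ ->].
Unshelve. all: end_near.
Qed.

Lemma bounded_sum_partial (u : nat -> R) (N : nat) :
  (forall n, `|u n| <= 1) -> `|series (fun k => u k *: v k) N| <= C.
Proof.
move=> u_le1.
pose pad (s : R) n := if (n < N)%N then u n else s.
have bounded_pad s : s = 1 \/ s = -1 -> bounded_sum (pad s).
  move=> s_sign; apply: (bounded_sum_eventually_sign N) => n; rewrite /pad.
    by case: ifP => _; [exact: u_le1 | case: s_sign => ->; rewrite ?normrN normr1].
  by rewrite ltnNge => ->.
have [y [cvy ny]] : bounded_sum (fun k => 2^-1 * pad 1 k + (1 - 2^-1) * pad (-1) k).
  apply: bounded_sum_convex; rewrite ?invr_ge0 ?invf_le1 ?ler1n //.
  - by apply: bounded_pad; left.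
  - by apply: bounded_pad; right.
have truncated : (fun k => (2^-1 * pad 1 k + (1 - 2^-1) * pad (-1) k) *: v k) =
    fun k => if (k < N)%N then u k *: v k else 0.
  apply/funext => k; rewrite /pad; case: ifP => _; first by congr (_ *: _); field.
  by rewrite (_ : _ + _ = 0) ?scale0r //; field.
rewrite truncated in cvy.
suff -> : series (fun k => u k *: v k) N = y by [].
exact: cvg_unique (series_truncated_cvg _ N) cvy.
Qed.

End BoundedSums.

Lemma coord_ratio (R : realFieldType) (a b : nat -> R) :
  (forall n, `|a n| <= `|b n|) ->
  exists u : nat -> R, (forall n, `|u n| <= 1) /\ forall n, a n = u n * b n.
Proof.
move=> ab; exists (fun n => if b n == 0 then 0 else a n / b n); split=> n.
  case: eqP => [_|/eqP bn0]; first by rewrite normr0.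
  by rewrite normrM normfV ler_pdivrMr ?normr_gt0 // mul1r.
case: eqP => [bn0|/eqP bn0]; last by rewrite mulfVK.
by have := ab n; rewrite bn0 normr0 normr_le0 mul0r => /eqP.
Qed.

Section Brick.
Context {R : realType} {X : completeNormedModType R} {e : nat -> X} {es : nat -> X -> R}.
Hypothesis es_linear : forall n (a : R) (x y : X), es n (a *: x + y) = a * es n x + es n y.
Hypothesis es_biorth : forall n m, es n (e m) = if n == m then 1 else 0.

Lemma basis_neq0 n : e n != 0.
Proof.
apply/eqP => en0; have := es_biorth n n; rewrite eqxx en0.
have := es_linear n 1 0 0; rewrite scale1r addr0 mul1r => es0.
have -> : es n 0 = 0 by lra.
by move/eqP; rewrite eq_sym oner_eq0.
Qed.

Lemma extreme_brick_coord (eps : nat -> R) (x0 : X) n :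
  extreme_point (brick es eps) x0 -> `|es n x0| = eps n.
Proof.
move=> [x0_brick extreme]; apply/eqP; rewrite eq_le x0_brick leNgt /=.
apply/negP => x0n_lt; set d := eps n - `|es n x0|.
have d_gt0 : 0 < d by rewrite subr_gt0.
have [|lam [/andP[lam_ge lam_le] out]] := extreme (d *: e n).
  by rewrite scaler_eq0 negb_or gt_eqF //= basis_neq0.
apply: out => m; rewrite addrC scalerA es_linear es_biorth.
have [<-|_] := eqVneq n m; last by rewrite mulr0 add0r.
apply: le_trans (ler_normD _ _) _; rewrite mulr1 normrM (ger0_norm (ltW d_gt0)).
have : `|lam| * d <= d.
  by apply: ler_piMl; [exact: ltW | rewrite ler_norml lam_ge lam_le].
by rewrite /d; lra.
Qed.

End Brick.

Theorem proposition2p8 (R : realType) (X : completeNormedModType R)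
  (e : nat -> X) (es : nat -> X -> R) (M : R) (eps : nat -> R) (x0 : X) :
  unconditional_basis e es -> normalized e ->
  unconditional_constant e es M ->
  (forall n, 0 <= eps n) ->
  extreme_point (brick es eps) x0 ->
  (forall x, brick es eps x -> `|x| <= M * `|x0|) /\
  (M = 1 -> forall x, brick es eps x -> `|x| <= `|x0|).
Proof.
move=> [[es_linear _ es_biorth expansion] signed_cvg] _ [M_bounds _] _ x0_extreme.
pose v k := es k x0 *: e k.
have signed_bounded theta : sign_seq theta -> bounded_sum v (M * `|x0|) theta.
  move=> theta_sign; have [y cvy] := signed_cvg theta x0 theta_sign.
  exists y; split; last exact: M_bounds cvy.
  have -> : (fun k => theta k *: v k) = fun k => (theta k * es k x0) *: e k.
    by apply/funext => k; rewrite /v scalerA.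
  exact: cvy.
have brick_bound x : brick es eps x -> `|x| <= M * `|x0|.
  move=> x_brick; have [u [u_le1 xu]] : exists u : nat -> R,
      (forall n, `|u n| <= 1) /\ forall n, es n x = u n * es n x0.
    by apply: coord_ratio => n; rewrite (extreme_brick_coord es_linear es_biorth _ _ n x0_extreme).
  apply: (norm_le_of_partial_sums _ _ _ (expansion x)) => N.
  have -> : (fun k => es k x *: e k) = fun k => u k *: v k.
    by apply/funext => k; rewrite /v scalerA xu.
  exact: bounded_sum_partial.
by split=> // M1 x /brick_bound; rewrite M1 mul1r.
Qed.
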